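(* For an integer $k\ge 1$ let $n_k=2^{2^k-1}$. Then $n_k$ is super-imperfect, i.e. $2\beta(\beta(n_k))=n_k$, if and only if $k\in\{1,2,3,4,5\}$.
   Context: $\beta$ is the multiplicative arithmetic function with $\beta(1)=1$ and $\beta(p^a)=p^a-p^{a-1}+p^{a-2}-\cdots+(-1)^a=\frac{p^{a+1}+(-1)^a}{p+1}$ for every prime power $p^a$ ($a\ge1$). A positive integer $n$ is called super-imperfect if $2\beta(\beta(n))=n$. *)

From mathcomp Require Import all_boot.
Set Implicit Arguments. Unset Strict Implicit. Unset Printing Implicit Defensive.

(* beta(p^a) = (p^(a+1) + (-1)^a) / (p+1)  (exact division, computed in nat). *)
Definition beta_pp (p a : nat) : nat :=
  (if odd a then p ^ a.+1 - 1 else p ^ a.+1 + 1) %/ p.+1.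

Definition beta (n : nat) : nat :=
  \prod_(p <- primes n) beta_pp p (logn p n).

Definition super_imperfect (n : nat) : Prop := 0 < n /\ 2 * beta (beta n) = n.

From mathcomp Require Import all_boot zify.

(* Let n_k = 2^a with a = 2^k - 1 (odd) and let F_i = 2^(2^i) + 1 be the Fermat
   numbers.  Since beta(2^a) = (2^(a+1) - 1)/3 and 2^(2^k) - 1 = F_0 ... F_(k-1)
   with F_0 = 3, we get beta(n_k) = F_1 ... F_(k-1).
   - If F_1, ..., F_(k-1) are all prime (true for k <= 5), this is a product of
     distinct primes, so beta(beta(n_k)) = prod (F_i - 1) = 2^(2^k - 2) and
     2 beta(beta(n_k)) = n_k.
   - If k >= 6 then 641 | F_5 divides beta(n_k).  For a prime p such that p - 1
     has an odd factor q > 1 (e.g. p = 641, q = 5), every beta(p^e) with e >= 1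
     has an odd divisor d > 1; this d then divides beta(beta(n_k)), which for a
     super-imperfect n_k would have to be the power of two 2^(a-1). *)

Lemma prod_primes_gt0 {s : seq nat} : all prime s -> 0 < \prod_(q <- s) q.
Proof.
move=> pr_s; rewrite big_seq prodn_cond_gt0 // => q q_s.
exact/prime_gt0/(allP pr_s).
Qed.

Lemma logn_prod_primes (s : seq nat) (p : nat) : all prime s ->
  logn p (\prod_(q <- s) q) = count_mem p s.
Proof.
elim: s => [|q s IH] /=; first by rewrite big_nil logn1.
case/andP=> pr_q pr_s.
rewrite big_cons (lognM _ (prime_gt0 pr_q) (prod_primes_gt0 pr_s)).
by rewrite logn_prime // IH // eq_sym.
Qed.

Lemma beta_pp1 (p : nat) : beta_pp p 1 = p.-1.
Proof.
rewrite /beta_pp /=; have -> : p ^ 2 - 1 = p.+1 * p.-1 by case: p => //= p; lia.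
by rewrite mulKn.
Qed.

Lemma beta_prod_distinct_primes (s : seq nat) : uniq s -> all prime s ->
  beta (\prod_(p <- s) p) = \prod_(p <- s) p.-1.
Proof.
move=> uniq_s pr_s.
have primes_s : perm_eq (primes (\prod_(p <- s) p)) s.
  apply: uniq_perm => // [|p]; first exact: primes_uniq.
  by rewrite -logn_gt0 logn_prod_primes // count_uniq_mem //; case: (p \in s).
rewrite /beta (perm_big _ primes_s) /=; apply: eq_big_seq => p p_s.
by rewrite logn_prod_primes // count_uniq_mem // p_s beta_pp1.
Qed.

Lemma beta_prime_pow (p a : nat) : prime p -> 0 < a -> beta (p ^ a) = beta_pp p a.
Proof.
by move=> pr_p a_gt0; rewrite /beta primesX // primes_prime // big_seq1 pfactorK.
Qed.

Lemma beta_pp_dvd_beta {n p : nat} : p \in primes n -> beta_pp p (logn p n) %| beta n.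
Proof. by move=> p_n; rewrite /beta (big_rem _ p_n) /= dvdn_mulr. Qed.

(* p^2 - 1 = (p + 1)(p - 1) divides every p^(2j) - 1. *)
Lemma dvd_pow_even_pred (p j : nat) : p.+1 * p.-1 %| p ^ j.*2 - 1.
Proof.
have -> : p.+1 * p.-1 = p ^ 2 - 1 by case: p => //= p; lia.
by rewrite -muln2 mulnC expnM -(exp1n j) subn_exp exp1n dvdn_mulr.
Qed.

(* If p is prime and p - 1 has an odd factor q > 1, then beta(p^e) has an odd
   divisor d > 1 for every e >= 1: for odd e, beta(p^e) = (p^(e+1) - 1)/(p + 1)
   is a multiple of p - 1, hence of q; for even e, beta(p^e) = 1 + p(p - 1)X
   with X > 0 is itself odd and > 1. *)
Lemma beta_pp_odd_divisor (p q e : nat) : prime p ->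
  odd q -> 1 < q -> q %| p.-1 -> 0 < e ->
  exists2 d, d %| beta_pp p e & odd d && (1 < d).
Proof.
move=> pr_p odd_q q_gt1 q_dvd e_gt0.
have p_gt1 := prime_gt1 pr_p.
have odd_p : odd p.
  by case: (even_prime pr_p) q_dvd => // ->; rewrite dvdn1 => /eqP q1; rewrite q1 in q_gt1.
rewrite /beta_pp; case: ifP => odd_e.
- exists q; rewrite ?odd_q ?q_gt1 //.
  have [j ->] : exists j, e.+1 = j.*2.
    by exists e.+1./2; rewrite -[LHS]odd_double_half /= odd_e.
  have [X ->] := dvdnP (dvd_pow_even_pred p j).
  by rewrite mulnCA mulKn // dvdn_mull.
- have [j e_eq] : exists j, e = j.*2.
    by exists e./2; rewrite -[LHS]odd_double_half odd_e.
  have [X X_eq] := dvdnP (dvd_pow_even_pred p j).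
  rewrite -e_eq in X_eq.
  have X_gt0 : 0 < X.
    have : 1 < p ^ e by rewrite -(exp1n e) ltn_exp2r.
    by rewrite lt0n; apply: contraTneq => X0; rewrite -leqNgt -subn_eq0 X_eq X0.
  have -> : p ^ e.+1 + 1 = p.+1 * (p * p.-1 * X).+1.
    rewrite expnS; move: X_eq; have : 0 < p ^ e by rewrite expn_gt0 ltnW.
    by case: p p_gt1 {odd_p pr_p q_dvd} => //= p _; nia.
  exists (p * p.-1 * X).+1; rewrite ?mulKn //= !oddM.
  have : ~~ odd p.-1 by case: p p_gt1 odd_p {pr_p q_dvd X_eq}.
  by move/negPf->; rewrite andbF ltnS !muln_gt0 X_gt0 andbT; lia.
Qed.

Lemma odd_dvd_pow2 {d j : nat} : odd d -> d %| 2 ^ j -> d = 1.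
Proof.
move=> odd_d /(dvdn_pfactor _ _ (isT : prime 2))[i _ d_eq].
by move: odd_d; rewrite d_eq oddX orbF => /eqP->.
Qed.

Definition fermat (i : nat) : nat := 2 ^ 2 ^ i + 1.

Lemma prod_fermat (k : nat) : (\prod_(0 <= i < k) fermat i).+1 = 2 ^ 2 ^ k.
Proof.
elim: k => [|k IH]; first by rewrite big_geq.
rewrite big_nat_recr //=; set P := \prod_(0 <= i < k) _.
by rewrite /fermat expnSr expnM -IH; nia.
Qed.

Lemma sum_pow2 (k : nat) : (\sum_(0 <= i < k) 2 ^ i).+1 = 2 ^ k.
Proof.
elim: k => [|k IH]; first by rewrite big_geq.
by rewrite big_nat_recr //= expnS -IH; lia.
Qed.

Lemma fermat_inj : injective fermat.
Proof. by move=> i j /addIn /eqP; rewrite !eqn_exp2l // => /eqP. Qed.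

Lemma dvdn_641_fermat5 : 641 %| fermat 5.
Proof. by rewrite /fermat; lia. Qed.

Lemma fermat_prime_small (i : nat) : 0 < i < 5 -> prime (fermat i).
Proof. by case: i => [|[|[|[|[|i]]]]] // _; vm_compute. Qed.

Lemma pow2_pred_double (k : nat) : 0 < k -> 2 ^ (2 ^ k - 1) = 2 * 2 ^ (2 ^ k - 2).
Proof.
move=> k_gt0; rewrite -expnS; congr (2 ^ _).
have : 2 ^ 1 <= 2 ^ k by rewrite leq_pexp2l.
by lia.
Qed.

(* beta(2^(2^k - 1)) = (2^(2^k) - 1)/3 = F_1 ... F_(k-1). *)
Lemma beta_pow2_fermat (k : nat) : 0 < k ->
  beta (2 ^ (2 ^ k - 1)) = \prod_(1 <= i < k) fermat i.
Proof.
move=> k_gt0; have odd_a : odd (2 ^ k - 1) by rewrite oddB ?expn_gt0 // oddX; case: k k_gt0.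
rewrite beta_prime_pow ?odd_gt0 // /beta_pp odd_a.
have -> : (2 ^ k - 1).+1 = 2 ^ k by rewrite subn1 prednK ?expn_gt0.
by rewrite -prod_fermat subn1 /= big_ltn // mulKn.
Qed.

Lemma fermat_primes_super_imperfect (k : nat) : 0 < k ->
  (forall i, 0 < i < k -> prime (fermat i)) -> super_imperfect (2 ^ (2 ^ k - 1)).
Proof.
move=> k_gt0 fermat_pr; split; first by rewrite expn_gt0.
set Fs := [seq fermat i | i <- index_iota 1 k].
have uniq_Fs : uniq Fs by rewrite map_inj_uniq ?iota_uniq //; exact: fermat_inj.
have prime_Fs : all prime Fs.
  by apply/allP => _ /mapP[i i_range ->]; apply: fermat_pr; rewrite -mem_index_iota.
have sum_exps : \sum_(1 <= i < k) 2 ^ i = 2 ^ k - 2.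
  by have := sum_pow2 k; rewrite big_ltn //; lia.
rewrite beta_pow2_fermat // -(big_map fermat predT id) beta_prod_distinct_primes //.
rewrite big_map (eq_bigr (fun i => 2 ^ 2 ^ i)) => [|i _]; last by rewrite /fermat addn1.
by rewrite -expn_sum sum_exps pow2_pred_double.
Qed.

(* For k >= 6 the factor 641 of F_5 makes beta(beta(n_k)) not a power of two. *)
Lemma not_super_imperfect_large (k : nat) : 5 < k -> ~ super_imperfect (2 ^ (2 ^ k - 1)).
Proof.
move=> k_gt5 [_]; have k_gt0 : 0 < k by apply: leq_trans k_gt5.
set m := beta (2 ^ (2 ^ k - 1)).
rewrite pow2_pred_double // => /eqP; rewrite eqn_pmul2l // => /eqP beta_m.
have prime_641 : prime 641 by vm_compute.
have m_eq : m = \prod_(1 <= i < k) fermat i by apply: beta_pow2_fermat.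
have m_gt0 : 0 < m by rewrite m_eq; apply: prodn_gt0 => i; rewrite /fermat addn1.
have p641_m : 641 \in primes m.
  have five_range : 5 \in index_iota 1 k by rewrite mem_index_iota.
  rewrite mem_primes prime_641 m_gt0 m_eq (big_rem _ five_range).
  exact/dvdn_mulr/dvdn_641_fermat5.
have [d d_dvd /andP[odd_d d_gt1]] :
    exists2 d, d %| beta_pp 641 (logn 641 m) & odd d && (1 < d).
  by apply: (@beta_pp_odd_divisor _ 5); rewrite ?logn_gt0.
have d_dvd_pow2 : d %| 2 ^ (2 ^ k - 2).
  by rewrite -beta_m (dvdn_trans d_dvd (beta_pp_dvd_beta p641_m)).
by rewrite (odd_dvd_pow2 odd_d d_dvd_pow2) in d_gt1.
Qed.

Theorem mainTheorem1 (k : nat) (hk : 1 <= k) :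
  super_imperfect (2 ^ (2 ^ k - 1)) <-> k \in [:: 1; 2; 3; 4; 5].
Proof.
have -> : (k \in [:: 1; 2; 3; 4; 5]) = (k <= 5) by rewrite !inE; lia.
split=> [super_imp | k_le5].
- rewrite leqNgt; apply/negP => k_gt5.
  exact: not_super_imperfect_large k_gt5 super_imp.
- apply: fermat_primes_super_imperfect => // i /andP[i_gt0 i_lt_k].
  by apply: fermat_prime_small; rewrite i_gt0 (leq_trans i_lt_k).
Qed.
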